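(* Let $r$ be the stochastic relative degree of system $(\Sigma_0)$ at $\bar x$. Then, for all $x$ in a neighbourhood of $\bar x$, $$\mathcal S^k_{f,l}h(x)=L^k_{f_S}h(x)\qquad\text{for all }k\in\{0,\dots,r-1\},$$ where $f_S(x)=f(x)-\frac12\frac{\partial l}{\partial x}(x)l(x)$.
   Context: System $(\Sigma_0)$: $dx_t=(f(x_t)+g(x_t)u)dt+l(x_t)d\mathcal W_t$, $y_t=h(x_t)$ (Itô sense), equivalently $\dot x_t=f(x_t)+g(x_t)u+l(x_t)\xi_t$ with $\xi_t$ white noise, $x\in\mathbb R^n$, $f,g,l:\mathbb R^n\to\mathbb R^n$, $h:\mathbb R^n\to\mathbb R$ smooth. Notation: $L_fh=\frac{\partial h}{\partial x}f$, $L^k_f h=L_fL_f^{k-1}h$, $L^0_fh=h$; $H_{l,l}h=l^\top\frac{\partial^2h}{\partial x^2}l$; $\mathcal S_{f,l}h(\xi,x)=L_fh(x)+L_lh(x)\xi+\frac12H_{l,l}h(x)$, iterated as $\mathcal S^k_{f,l}h=\mathcal S_{f,l}\mathcal S^{k-1}_{f,l}h$ whenever $\mathcal S^{k-1}_{f,l}h$ is independent of $\xi$, $\mathcal S^0_{f,l}h=h$. Stochastic relative degree $r$ at $\bar x$ for $(\Sigma_0)$: (ND) $L_l\mathcal S^k_{f,l}h(x)=0$ for all $x$ near $\bar x$ and $k\in\{0,\dots,r-2\}$; (CD) $L_g\mathcal S^k_{f,l}h(x)=0$ for all $x$ near $\bar x$ and $k\in\{0,\dots,r-2\}$; (RD)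 $L_g\mathcal S^{r-1}_{f,l}h(\bar x)\neq0$. *)

From HB Require Import structures.
From mathcomp Require Import all_boot all_order all_algebra.
From mathcomp Require Import all_classical all_reals all_analysis.
Set Implicit Arguments. Unset Strict Implicit. Unset Printing Implicit Defensive.
Import Order.TTheory GRing.Theory Num.Theory.
Import numFieldNormedType.Exports.
Local Open Scope ring_scope.

Section Defs.
Variables (R : realType) (n : nat).
Local Notation V := 'rV[R]_n.

Fixpoint Dn {W : normedModType R} (vs : seq V) (F : V -> W) : V -> W :=
  match vs with
  | [::] => F
  | v :: vs' => fun x => 'D_v (Dn vs' F) x
  end.

Definition smooth {W : normedModType R} (F : V -> W) : Prop :=
  forall (vs : seq V) (x : V), differentiable (Dn vs F) x.

Definition Lie (f : V -> V) (h : V -> R) : V -> R := fun x => 'D_(f x) h x.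

Fixpoint Lie_iter (f : V -> V) (k : nat) (h : V -> R) : V -> R :=
  match k with
  | 0%N => h
  | k'.+1 => Lie f (Lie_iter f k' h)
  end.

(* H_{l,l} h (x) = l(x)^T (d^2 h/dx^2)(x) l(x) *)
Definition Hll (l : V -> V) (h : V -> R) : V -> R :=
  fun x => 'D_(l x) (fun y => 'D_(l x) h y) x.

Definition Sop (f l : V -> V) (h : V -> R) (xi : R) : V -> R :=
  fun x => Lie f h x + Lie l h x * xi + 2^-1 * Hll l h x.

(* The iteration S^{k+1} = S S^k is only meaningful when
   S^k is independent of xi; we feed the previous iterate as the function
   x |-> S^k h (0, x) (which equals S^k h (xi, x) for every xi wherever
   the independence holds). *)
Fixpoint Siter (f l : V -> V) (k : nat) (h : V -> R) : R -> V -> R :=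
  match k with
  | 0%N => fun _ => h
  | k'.+1 => Sop f l (Siter f l k' h 0)
  end.

Definition stoch_rel_deg (f g l : V -> V) (h : V -> R) (r : nat) (xbar : V)
  : Prop :=
  (0 < r)%N /\
  (forall k : nat, (k.+2 <= r)%N -> forall xi : R,
     \forall x \near xbar, Lie l (Siter f l k h xi) x = 0) /\
  (forall k : nat, (k.+2 <= r)%N -> forall xi : R,
     \forall x \near xbar, Lie g (Siter f l k h xi) x = 0) /\
  (forall xi : R, Lie g (Siter f l r.-1 h xi) xbar != 0).

Definition fS (f l : V -> V) : V -> V :=
  fun x => f x - 2^-1 *: 'D_(l x) l x.

End Defs.

(* Whenever L_l S^k h vanishes near a point, differentiating that identity along
   l gives (dl/dx l) . grad S^k h + l^T (d^2 S^k h/dx^2) l = 0, so the Ito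
   correction 1/2 H_{l,l} S^k h equals -1/2 L_{(dl/dx) l} S^k h and
   S_{f,l} S^k h = L_{f_S} S^k h.  Condition (ND) provides the vanishing for
   k <= r - 2, and an induction on k, carried by neighbourhoods of xbar, gives
   S^k h = L_{f_S}^k h for k <= r - 1. *)
From HB Require Import structures.
From mathcomp Require Import all_boot all_order all_algebra.
From mathcomp Require Import all_classical all_reals all_analysis.
Set Implicit Arguments. Unset Strict Implicit. Unset Printing Implicit Defensive.
Import Order.TTheory GRing.Theory Num.Theory.
Import numFieldNormedType.Exports.
Local Open Scope ring_scope.

Section SmoothCalculus.
Variables (R : realType) (n : nat).
Local Notation V := 'rV[R]_n.
Local Notation e j := (delta_mx 0 j : V).
Implicit Types (F G : V -> R).

Lemma Dn_rcons {W : normedModType R} vs v (F : V -> W) :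
  Dn (rcons vs v) F = Dn vs (fun x => 'D_v F x).
Proof. by elim: vs => [|w vs IH] //=; rewrite IH. Qed.

Lemma smooth_derive {W : normedModType R} (F : V -> W) v :
  smooth F -> smooth (fun x => 'D_v F x).
Proof. by move=> sF vs x; rewrite -Dn_rcons; apply: sF. Qed.

Lemma Dn_add {W : normedModType R} vs (A B : V -> W) :
  (forall ws, (size ws < size vs)%N -> forall x,
     differentiable (Dn ws A) x /\ differentiable (Dn ws B) x) ->
  Dn vs (fun x => A x + B x) = (fun x => Dn vs A x + Dn vs B x).
Proof.
elim: vs => [|v vs IH] dAB //=.
rewrite IH; last by move=> ws hws x; apply: dAB; rewrite /= ltnS ltnW.
apply/funext => x; have [dA dB] := dAB vs (ltnSn _) x.
by rewrite deriveD //; apply: diff_derivable.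
Qed.

Lemma Dn_scale {W : normedModType R} vs k (A : V -> W) : smooth A ->
  Dn vs (fun x => k *: A x) = (fun x => k *: Dn vs A x).
Proof.
move=> sA; elim: vs => [|v vs IH] //=.
by rewrite IH; apply/funext => x; rewrite deriveZ //; apply: diff_derivable.
Qed.

Lemma Dn_cst0 {W : normedModType R} vs :
  Dn vs (fun _ : V => 0 : W) = (fun _ => 0).
Proof.
elim: vs => [|v vs IH] //=; rewrite IH.
by apply/funext => x; apply: (derive_cst (0 : W)).
Qed.

Lemma smoothD {W : normedModType R} (A B : V -> W) :
  smooth A -> smooth B -> smooth (fun x => A x + B x).
Proof.
move=> sA sB vs x; rewrite Dn_add; first exact: differentiableD.
by move=> ws _ y; split.
Qed.

Lemma smoothZ {W : normedModType R} k (A : V -> W) :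
  smooth A -> smooth (fun x => k *: A x).
Proof. by move=> sA vs x; rewrite Dn_scale //; apply: differentiableZ. Qed.

Lemma smooth0 {W : normedModType R} : smooth (fun _ : V => 0 : W).
Proof. by move=> vs x; rewrite Dn_cst0; apply: differentiable_cst. Qed.

Lemma smooth_sum {W : normedModType R} (I : Type) (s : seq I) (A : I -> V -> W) :
  (forall i, smooth (A i)) -> smooth (fun x => \sum_(i <- s) A i x).
Proof.
move=> sA; elim: s => [|i s IH].
  by under eq_fun do rewrite big_nil; apply: smooth0.
by under eq_fun do rewrite big_cons; apply: smoothD.
Qed.

Lemma deriveM_differentiable F G x v :
  differentiable F x -> differentiable G x ->
  'D_v (fun y => F y * G y) x = 'D_v F x * G x + F x * 'D_v G x.
Proof.
move=> dF dG.
have := deriveM (diff_derivable dF : derivable F x v) (diff_derivable dG).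
by rewrite /= => ->; rewrite addrC mulrC.
Qed.

Lemma differentiable_DnM N vs : (size vs <= N)%N -> forall F G,
  smooth F -> smooth G -> forall x, differentiable (Dn vs (fun y => F y * G y)) x.
Proof.
elim: N vs => [|N IH] vs.
  rewrite leqn0 => /nilP -> F G sF sG x /=.
  by apply: differentiableM; [apply: (sF [::]) | apply: (sG [::])].
case/lastP: vs => [_ F G sF sG x | ws v].
  by apply: differentiableM; [apply: (sF [::]) | apply: (sG [::])].
rewrite size_rcons ltnS => hws F G sF sG x; rewrite Dn_rcons.
have -> : (fun y => 'D_v (fun z => F z * G z) y) =
    (fun y => 'D_v F y * G y + F y * 'D_v G y).
  apply/funext => y; rewrite deriveM_differentiable //.
  - exact: (sF [::]).
  - exact: (sG [::]).
have sDF := smooth_derive v sF; have sDG := smooth_derive v sG.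
rewrite Dn_add; first by apply: differentiableD; apply: IH.
by move=> us hus y; have hus' := leq_trans (ltnW hus) hws; split; apply: IH.
Qed.

Lemma smoothM F G : smooth F -> smooth G -> smooth (fun y => F y * G y).
Proof. by move=> sF sG vs x; apply: (@differentiable_DnM (size vs)). Qed.

Lemma derive_coord (A : V -> V) x v j : differentiable A x ->
  'D_v (fun y => A y 0 j) x = ('D_v A x) 0 j.
Proof.
move=> dA.
have dc : differentiable (fun M : V => M 0 j : R) (A x).
  exact: differentiable_coord.
rewrite deriveE; last exact: (differentiable_comp dA dc).
rewrite (deriveE _ dA) -[fun y => A y 0 j]/((fun M : V => M 0 j : R) \o A).
rewrite diff_comp //=.
have @c : {linear V -> R}.
  by exists (fun M : V => M 0 j); do 2![eexists]; do ?[constructor];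
     rewrite ?mxE // => ? *; rewrite ?mxE //; move=> ?; rewrite !mxE.
rewrite (_ : (fun M : V => M 0 j) = c) //.
by rewrite diff_lin //; apply: coord_continuous.
Qed.

Lemma Dn_coord vs (A : V -> V) j : smooth A ->
  Dn vs (fun x => A x 0 j) = (fun x => Dn vs A x 0 j).
Proof.
move=> sA; elim: vs => [|v vs IH] //=; rewrite IH.
by apply/funext => x; rewrite derive_coord.
Qed.

Lemma smooth_coord (A : V -> V) j : smooth A -> smooth (fun x => A x 0 j).
Proof.
move=> sA vs x; rewrite Dn_coord //.
apply: (@differentiable_comp _ _ _ _ (Dn vs A) (fun M : V => M 0 j : R)).
  exact: sA.
exact: differentiable_coord.
Qed.

Lemma derive_delta_sum {W : normedModType R} (F : V -> W) x w :
  differentiable F x -> 'D_w F x = \sum_(j < n) w 0 j *: 'D_(e j) F x.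
Proof.
move=> dF; rewrite deriveE // {1}(row_sum_delta w) linear_sum.
by apply: eq_bigr => j _; rewrite linearZ deriveE.
Qed.

Lemma derive_sum_fun {W : normedModType R} (A : 'I_n -> V -> W) x v :
  (forall j, differentiable (A j) x) ->
  'D_v (fun y => \sum_(j < n) A j y) x = \sum_(j < n) 'D_v (A j) x.
Proof.
move=> dA; rewrite -derive_sum; last by move=> j; apply: diff_derivable.
by rewrite fct_sumE.
Qed.

End SmoothCalculus.

Section LieDerivative.
Variables (R : realType) (n : nat).
Local Notation V := 'rV[R]_n.
Local Notation e j := (delta_mx 0 j : V).
Implicit Types (f l : V -> V) (phi : V -> R).

Lemma Lie_delta_sum f phi x : differentiable phi x ->
  Lie f phi x = \sum_(j < n) f x 0 j * 'D_(e j) phi x.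
Proof. by move=> dphi; rewrite /Lie derive_delta_sum. Qed.

Lemma smooth_Lie f phi : (forall j, smooth (fun x => f x 0 j)) -> smooth phi ->
  smooth (Lie f phi).
Proof.
move=> sf sphi.
rewrite (_ : Lie f phi = fun x => \sum_(j < n) f x 0 j * 'D_(e j) phi x).
  by apply: smooth_sum => j; apply: smoothM => //; apply: smooth_derive.
by apply/funext => x; apply: Lie_delta_sum; apply: (sphi [::]).
Qed.

Lemma fS_coord f l x j : differentiable l x ->
  fS f l x 0 j = f x 0 j - 2^-1 * Lie l (fun y => l y 0 j) x.
Proof. by move=> dl; rewrite /fS /Lie !mxE derive_coord. Qed.

Lemma smooth_fS_coord f l j : smooth f -> smooth l ->
  smooth (fun x => fS f l x 0 j).
Proof.
move=> sf sl.
rewrite (_ : (fun x => _) =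
    fun x => f x 0 j + (- 2^-1) *: Lie l (fun y => l y 0 j) x).
  apply: smoothD; first exact: smooth_coord.
  by apply: smoothZ; apply: smooth_Lie => [k|]; apply: smooth_coord.
apply/funext => x; rewrite fS_coord; last exact: (sl [::]).
by rewrite scaleNr.
Qed.

Lemma smooth_Lie_iter f phi k : (forall j, smooth (fun x => f x 0 j)) ->
  smooth phi -> smooth (Lie_iter f k phi).
Proof. by move=> sf sphi; elim: k => [|k IH] //=; apply: smooth_Lie. Qed.

Lemma Lie_fS f l phi x : differentiable phi x ->
  Lie (fS f l) phi x = Lie f phi x - 2^-1 * 'D_('D_(l x) l x) phi x.
Proof.
move=> dphi; rewrite /Lie /fS (deriveE (f x - _) dphi) linearB linearZ /=.
by rewrite -!(deriveE _ dphi).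
Qed.

Lemma derive_Lie l phi x v : smooth l -> smooth phi ->
  'D_v (Lie l phi) x =
    'D_('D_v l x) phi x + 'D_v (fun y => 'D_(l x) phi y) x.
Proof.
move=> sl sphi.
have dphi y : differentiable phi y by apply: (sphi [::]).
have dl_ j y : differentiable (fun z => l z 0 j) y.
  exact: (smooth_coord j sl [::]).
have dDphi j y : differentiable (fun z => 'D_(e j) phi z) y.
  exact: (smooth_derive (e j) sphi [::]).
rewrite (_ : Lie l phi = fun y => \sum_(j < n) l y 0 j * 'D_(e j) phi y);
  last by apply/funext => y; apply: Lie_delta_sum.
rewrite derive_sum_fun; last by move=> j; apply: differentiableM.
under eq_bigr do rewrite deriveM_differentiable //.
rewrite big_split /= (derive_delta_sum _ (dphi x)).
congr (_ + _).
  by apply: eq_bigr => j _; rewrite derive_coord //; apply: (sl [::]).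
rewrite (_ : (fun y => 'D_(l x) phi y) =
    fun y => \sum_(j < n) l x 0 j *: 'D_(e j) phi y);
  last by apply/funext => y; apply: derive_delta_sum.
rewrite derive_sum_fun; last by move=> j; apply: differentiableZ.
by apply: eq_bigr => j _; rewrite deriveZ //; apply: diff_derivable.
Qed.

Lemma Hll_Lie_eq0 l phi x : smooth l -> smooth phi ->
  (\forall y \near x, Lie l phi y = 0) ->
  Hll l phi x = - 'D_('D_(l x) l x) phi x.
Proof.
move=> sl sphi Lie0; apply/eqP; rewrite -addr_eq0 addrC /Hll -derive_Lie //.
by rewrite (@near_eq_derive _ _ _ _ (cst 0)) ?derive_cst.
Qed.

(* [psi] stands for [S^k h], which is only known to agree with the smooth
   [phi = L^k_{f_S} h] near [x]. *)
Lemma Sop_near_Lie_fS f l psi phi xi x : smooth l -> smooth phi ->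
  (\forall y \near x, psi y = phi y) ->
  (\forall y \near x, Lie l psi y = 0) ->
  Sop f l psi xi x = Lie (fS f l) phi x.
Proof.
move=> sl sphi psi_phi Lie0.
have psi_phi2 := near_join psi_phi.
have LieE y : (\forall z \near y, psi z = phi z) -> Lie l psi y = Lie l phi y.
  exact: near_eq_derive.
have HllE : Hll l psi x = Hll l phi x.
  by apply: near_eq_derive; near=> y; apply: near_eq_derive; near: y.
rewrite /Sop (nbhs_singleton Lie0) mul0r addr0 HllE.
rewrite Hll_Lie_eq0 //; last by near=> y; rewrite -LieE ?(near Lie0 y) //; near: y.
rewrite Lie_fS; last exact: (sphi [::]).
by rewrite mulrN /Lie (near_eq_derive _ psi_phi).
Unshelve. all: by end_near.
Qed.

End LieDerivative.

Lemma Siter_near_Lie_iter (R : realType) (n : nat) (f g l : 'rV[R]_n -> 'rV[R]_n)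
    (h : 'rV[R]_n -> R) (xbar : 'rV[R]_n) (r : nat) :
  smooth f -> smooth l -> smooth h -> stoch_rel_deg f g l h r xbar ->
  forall m, (m < r)%N -> \forall x \near xbar, forall k, (k <= m)%N ->
    forall xi, Siter f l k h xi x = Lie_iter (fS f l) k h x.
Proof.
move=> sf sl sh [_ [ND _]]; elim=> [|m IH] mr.
  by apply: filterE => x k; rewrite leqn0 => /eqP ->.
have IHm := near_join (IH (ltnW mr)).
have ND2 := near_join (ND m mr 0).
apply: filterS2 IHm ND2 => x IHx NDx k.
rewrite leq_eqVlt ltnS => /orP[/eqP -> xi /= | km]; last exact: (nbhs_singleton IHx k km).
apply: Sop_near_Lie_fS => //.
- by apply: smooth_Lie_iter => // j; apply: smooth_fS_coord.
- by apply: filterS IHx => y /(_ m (leqnn m) 0).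
Qed.

Theorem lemma1 (R : realType) (n : nat) (f g l : 'rV[R]_n -> 'rV[R]_n)
  (h : 'rV[R]_n -> R) (xbar : 'rV[R]_n) (r : nat) :
  smooth f -> smooth g -> smooth l -> smooth h ->
  stoch_rel_deg f g l h r xbar ->
  \forall x \near xbar, forall k : nat, (k < r)%N -> forall xi : R,
    Siter f l k h xi x = Lie_iter (fS f l) k h x.
Proof.
move=> sf _ sl sh rdeg; have r0 : (0 < r)%N by case: rdeg.
have r1r : (r.-1 < r)%N by rewrite ltn_predL.
have := Siter_near_Lie_iter sf sl sh rdeg r1r.
apply: filterS => x eqk k kr; apply: eqk.
by rewrite -ltnS prednK.
Qed.
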